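(* Let $k\ge 4$ and $n\ge 2$ be integers, and let $\ket{a_1},\dots,\ket{a_n},\ket{b_1},\dots,\ket{b_n}\in\mathbb{C}^k$ be vectors such that the set $\{\ket{a_1},\dots,\ket{a_n},\ket{b_1},\dots,\ket{b_n}\}$ is linearly independent (so $2n\le k$). Put $\ket{v}=\sum_{i=1}^n \ket{a_i}\otimes\ket{b_i}\in\mathbb{C}^k\otimes\mathbb{C}^k$ and, for $\varepsilon>0$, $$\gamma_\varepsilon=\mathbb{I}+\mathbb{F}+\varepsilon\,\ket{v}\!\bra{v},$$ where $\mathbb{I}$ is the identity on $\mathbb{C}^k\otimes\mathbb{C}^k$ and $\mathbb{F}=\sum_{i,j=1}^k\ket{i}\!\bra{j}\otimes\ket{j}\!\bra{i}$ is the swap operator. Then there exists $\varepsilon_0>0$ such that for every $0<\varepsilon<\varepsilon_0$, the normalized state $\gamma_\varepsilon/\mathrm{Tr}(\gamma_\varepsilon)$ is entangled, has positive semidefinite partial transpose (i.e. it is a PPT entangled, or bound entangled, state), and its realignment $\mathcal{R}(\gamma_\varepsilon)$ is an invertible matrix (i.e. the state is faithful and hence can serve as a probe state for ancilla-assisted quantum process tomography).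
   Context: $\{\ket{i}\}_{i=1}^k$ is the computational basis of $\mathbb{C}^k$. For an operator $\rho=\sum_{i,j,k,l}\rho_{ij,kl}\,\ket{i}\!\bra{j}\otimes\ket{k}\!\bra{l}$ on $\mathbb{C}^k\otimes\mathbb{C}^k$, the realignment is $\mathcal{R}(\rho)=\sum_{i,j,k,l}\rho_{ij,kl}\,\ket{i}\!\bra{k}\otimes\ket{j}\!\bra{l}$. The partial transpose $\rho^\Gamma$ is the transpose on the second tensor factor in the computational basis. A bipartite state is called faithful if $\mathcal{R}(\rho)$ has no zero singular values (is invertible); faithfulness is the condition under which the state can replace the maximally entangled state in ancilla-assisted quantum process tomography. A state is entangled if it is not a convex combination of product states. *)

From HB Require Import structures.
From mathcomp Require Import all_boot all_order all_algebra.
From mathcomp Require Import complex mxtens.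
From mathcomp Require Import reals.
Set Implicit Arguments.
Unset Strict Implicit.
Unset Printing Implicit Defensive.
Import Order.TTheory GRing.Theory Num.Theory.
Local Open Scope ring_scope.

Section QI.
Variable C : numClosedFieldType.

Definition adjmx m n (A : 'M[C]_(m, n)) : 'M[C]_(n, m) := (map_mx Num.conj A)^T.

(* positive semidefinite: <x|M|x> >= 0 for all x (in a numClosedField,
   0 <= z means z is real and nonnegative) *)
Definition psdmx n (M : 'M[C]_n) : Prop :=
  forall x : 'cV[C]_n, 0 <= (adjmx x *m M *m x) 0 0.

Definition density n (M : 'M[C]_n) : Prop := psdmx M /\ \tr M = 1.

Definition swapmx k : 'M[C]_(k * k) :=
  \sum_(i < k) \sum_(j < k) (delta_mx i j *t delta_mx j i).

(* coefficient rho_{ij,kl} of |i><j| (x) |k><l| *)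
Definition coef k (rho : 'M[C]_(k * k)) (i j k' l : 'I_k) : C :=
  rho (mxtens_index (i, k')) (mxtens_index (j, l)).

Definition ptrans k (rho : 'M[C]_(k * k)) : 'M[C]_(k * k) :=
  \sum_(i < k) \sum_(j < k) \sum_(k' < k) \sum_(l < k)
    coef rho i j k' l *: (delta_mx i j *t delta_mx l k').

Definition realign k (rho : 'M[C]_(k * k)) : 'M[C]_(k * k) :=
  \sum_(i < k) \sum_(j < k) \sum_(k' < k) \sum_(l < k)
    coef rho i j k' l *: (delta_mx i k' *t delta_mx j l).

Definition separable k (rho : 'M[C]_(k * k)) : Prop :=
  exists (N : nat) (p : 'I_N -> C) (sigma tau : 'I_N -> 'M[C]_k),
    (forall m, 0 <= p m) /\ \sum_(m < N) p m = 1 /\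
    (forall m, density (sigma m)) /\ (forall m, density (tau m)) /\
    rho = \sum_(m < N) p m *: (sigma m *t tau m).

Definition entangled k (rho : 'M[C]_(k * k)) : Prop :=
  density rho /\ ~ separable rho.

Definition lin_indep2 k n (a b : 'I_n -> 'cV[C]_k) : Prop :=
  forall c d : 'I_n -> C,
    \sum_(i < n) c i *: a i + \sum_(i < n) d i *: b i = 0 ->
    (forall i, c i = 0) /\ (forall i, d i = 0).

Definition vvec k n (a b : 'I_n -> 'cV[C]_k) : 'cV[C]_(k * k) :=
  \sum_(i < n) (a i *t b i : 'M[C]_(k * k, 1)).

Definition gammaeps k n (a b : 'I_n -> 'cV[C]_k) (eps : C) : 'M[C]_(k * k) :=
  1%:M + swapmx k + eps *: (vvec a b *m adjmx (vvec a b)).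

End QI.

(* [I + F] is twice the projector onto the symmetric subspace, so [gammaeps] is
   positive semidefinite.  Partial transposition maps [I + F] to [I + omegamx]
   and realignment maps it to [omegamx + F], where [omegamx = |omega><omega|]
   for the unnormalized maximally entangled vector [omega = sum_i |i>|i>].  The
   first is at least [I]; the second is invertible with inverse
   [F - omegamx / (k + 1)], because [F^2 = I], [F omega = omega] and
   [<omega|omega> = k].  Entrywise l1 estimates show that both properties
   survive the perturbation [eps |v><v|] for small [eps].

   For entanglement, identify [C^k (x) C^k] with [k x k] matrices, [x (x) y]
   with [x y^T], so that [F] becomes transposition.  [I + F] vanishes on
   antisymmetric vectors, hence [<u|gammaeps|u> = eps |<v|u>|^2] for them.  If
   [gammaeps] were a sum of rank-one projections onto product vectors
   [x_i (x) y_i], each of these would be orthogonal to every antisymmetric [u]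
   orthogonal to [v], which makes its antisymmetric part [x_i y_i^T - y_i x_i^T]
   proportional to [V - V^T], where [V = sum_j a_j b_j^T]; for an [i] with
   [<x_i (x) y_i|V - V^T> <> 0] the factor is nonzero.  But the former has rank
   at most 2 and the latter rank [2n >= 4], by linear independence. *)

From HB Require Import structures.
From mathcomp Require Import all_boot all_order all_algebra.
From mathcomp Require Import complex mxtens spectral.
From mathcomp Require Import reals.
Set Implicit Arguments.
Unset Strict Implicit.
Unset Printing Implicit Defensive.
Import Order.TTheory GRing.Theory Num.Theory.
Local Open Scope ring_scope.

Section Adjoint.
Variable C : numClosedFieldType.

Lemma adjmxD m n (A B : 'M[C]_(m, n)) : adjmx (A + B) = adjmx A + adjmx B.
Proof. by apply/matrixP => i j; rewrite !mxE rmorphD. Qed.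

Lemma adjmxZ m n c (A : 'M[C]_(m, n)) : adjmx (c *: A) = c^* *: adjmx A.
Proof. by apply/matrixP => i j; rewrite !mxE rmorphM. Qed.

Lemma adjmxN m n (A : 'M[C]_(m, n)) : adjmx (- A) = - adjmx A.
Proof. by apply/matrixP => i j; rewrite !mxE rmorphN. Qed.

Lemma adjmxK m n (A : 'M[C]_(m, n)) : adjmx (adjmx A) = A.
Proof. by apply/matrixP => i j; rewrite !mxE conjCK. Qed.

Lemma adjmxM m n p (A : 'M[C]_(m, n)) (B : 'M[C]_(n, p)) :
  adjmx (A *m B) = adjmx B *m adjmx A.
Proof. by rewrite /adjmx map_mxM trmx_mul. Qed.

Lemma adjmx1 n : adjmx (1%:M : 'M[C]_n) = 1%:M.
Proof. by rewrite /adjmx map_mx1 trmx1. Qed.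

Lemma adjmx_tens m n p q (A : 'M[C]_(m, n)) (B : 'M[C]_(p, q)) :
  adjmx (A *t B) = adjmx A *t adjmx B.
Proof. by rewrite /adjmx map_mxT trmx_tens. Qed.

Definition dotv n (x y : 'cV[C]_n) : C := (adjmx x *m y) 0 0.

Lemma dotvE n (x y : 'cV[C]_n) : dotv x y = \sum_p (x p 0)^* * y p 0.
Proof. by rewrite /dotv mxE; apply: eq_bigr => p _; rewrite !mxE. Qed.

Lemma dotv_conj n (x y : 'cV[C]_n) : (dotv x y)^* = dotv y x.
Proof.
rewrite !dotvE rmorph_sum; apply: eq_bigr => p _.
by rewrite rmorphM /= conjCK mulrC.
Qed.

Lemma dotv0r n (x : 'cV[C]_n) : dotv x 0 = 0.
Proof. by rewrite /dotv mulmx0 mxE. Qed.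

Lemma dotvDr n (x y z : 'cV[C]_n) : dotv x (y + z) = dotv x y + dotv x z.
Proof. by rewrite /dotv mulmxDr mxE. Qed.

Lemma dotvDl n (x y z : 'cV[C]_n) : dotv (x + y) z = dotv x z + dotv y z.
Proof. by rewrite /dotv adjmxD mulmxDl mxE. Qed.

Lemma dotvZr n c (x y : 'cV[C]_n) : dotv x (c *: y) = c * dotv x y.
Proof. by rewrite /dotv -scalemxAr mxE. Qed.

Lemma dotvZl n c (x y : 'cV[C]_n) : dotv (c *: x) y = c^* * dotv x y.
Proof. by rewrite /dotv adjmxZ -scalemxAl mxE. Qed.

Lemma dotvBr n (x y z : 'cV[C]_n) : dotv x (y - z) = dotv x y - dotv x z.
Proof. by rewrite -scaleN1r dotvDr dotvZr mulN1r. Qed.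

Lemma dotvBl n (x y z : 'cV[C]_n) : dotv (x - y) z = dotv x z - dotv y z.
Proof. by rewrite -scaleN1r dotvDl dotvZl rmorphN1 mulN1r. Qed.

Lemma dotv_sumr n I (r : seq I) (P : pred I) (x : 'cV[C]_n) (F : I -> 'cV[C]_n) :
  dotv x (\sum_(i <- r | P i) F i) = \sum_(i <- r | P i) dotv x (F i).
Proof. by rewrite /dotv mulmx_sumr summxE. Qed.

Lemma dotv_mulmxr n (A : 'M[C]_n) (x y : 'cV[C]_n) :
  dotv x (A *m y) = dotv (adjmx A *m x) y.
Proof. by rewrite /dotv adjmxM adjmxK mulmxA. Qed.

Lemma dotvvE n (x : 'cV[C]_n) : dotv x x = \sum_p `|x p 0| ^+ 2.
Proof. by rewrite dotvE; apply: eq_bigr => p _; rewrite normCKC. Qed.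

Lemma dotvv_ge0 n (x : 'cV[C]_n) : 0 <= dotv x x.
Proof. by rewrite dotvvE sumr_ge0 // => p _; rewrite exprn_ge0. Qed.

Lemma dotvv_eq0 n (x : 'cV[C]_n) : (dotv x x == 0) = (x == 0).
Proof.
apply/idP/eqP => [|->]; last by rewrite dotvE big1 // => p _; rewrite mxE mulr0.
rewrite dotvvE psumr_eq0 => [/allP x0|p _]; last exact: exprn_ge0.
apply/matrixP => p j; rewrite ord1 mxE.
by have /implyP := x0 p (mem_index_enum _); rewrite sqrf_eq0 normr_eq0 => /(_ isT)/eqP.
Qed.

Lemma dotv_delta n (A : 'M[C]_n) p q :
  dotv (delta_mx p 0) (A *m delta_mx q 0) = A p q.
Proof.
rewrite /dotv; have -> : adjmx (delta_mx p 0 : 'cV[C]_n) = delta_mx 0 p.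
  by apply/matrixP => i j; rewrite !mxE rmorph_nat ord1 eqxx andbC.
by rewrite mulmxA -rowE -colE !mxE.
Qed.

Lemma dotv_rank1 n (z x : 'cV[C]_n) :
  dotv x ((z *m adjmx z) *m x) = `|dotv z x| ^+ 2.
Proof.
rewrite /dotv -mulmxA mulmxA [(adjmx x *m z *m _) 0 0]mxE big_ord1.
by rewrite -/(dotv x z) -/(dotv z x) -dotv_conj normCKC.
Qed.

Lemma dotv_sum_rank1 n (I : finType) (w : I -> 'cV[C]_n) u :
  dotv u ((\sum_i w i *m adjmx (w i)) *m u) = \sum_i `|dotv (w i) u| ^+ 2.
Proof. by rewrite mulmx_suml dotv_sumr; apply: eq_bigr => i _; rewrite dotv_rank1. Qed.

End Adjoint.

Section PositiveSemidefinite.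
Variable C : numClosedFieldType.

Lemma psdmxP n (A : 'M[C]_n) : psdmx A <-> forall x, 0 <= dotv x (A *m x).
Proof. by split=> A_ge0 x; [rewrite /dotv mulmxA | rewrite -mulmxA]; apply: A_ge0. Qed.

Lemma quadratic_form_eq0 n (A : 'M[C]_n) :
  (forall x, dotv x (A *m x) = 0) -> A = 0.
Proof.
move=> A0; apply/matrixP => p q; rewrite mxE.
set ep := (delta_mx p 0 : 'cV[C]_n); set eq := (delta_mx q 0 : 'cV[C]_n).
have polar c : dotv (ep + c *: eq) (A *m (ep + c *: eq)) = c * A p q + c^* * A q p.
  rewrite mulmxDr -scalemxAr dotvDl !dotvDr !dotvZl !dotvZr !A0 !dotv_delta.
  by rewrite !mulr0 add0r addr0.
have := polar 1; have := polar 'i; rewrite !A0 conjCi rmorph1 !mul1r.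
move/eqP; rewrite eq_sym mulNr -mulrBr mulf_eq0 (negbTE (neq0Ci C)) /= subr_eq0.
by move/eqP=> ->; rewrite -mulr2n => /esym/eqP; rewrite mulrn_eq0 => /eqP.
Qed.

Lemma psd_hermitian n (A : 'M[C]_n) : psdmx A -> adjmx A = A.
Proof.
move=> /psdmxP A_ge0; apply/eqP; rewrite -subr_eq0; apply/eqP.
apply: quadratic_form_eq0 => x.
by rewrite mulmxBl dotvBr [dotv x (adjmx A *m x)]dotv_mulmxr adjmxK -dotv_conj geC0_conj ?subrr.
Qed.

Lemma psdmxD n (A B : 'M[C]_n) : psdmx A -> psdmx B -> psdmx (A + B).
Proof.
move=> /psdmxP A_ge0 /psdmxP B_ge0; apply/psdmxP => x.
by rewrite mulmxDl dotvDr addr_ge0.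
Qed.

Lemma psdmxZ n c (A : 'M[C]_n) : 0 <= c -> psdmx A -> psdmx (c *: A).
Proof.
move=> c_ge0 /psdmxP A_ge0; apply/psdmxP => x.
by rewrite -scalemxAl dotvZr mulr_ge0.
Qed.

Lemma psd_rank1 n (z : 'cV[C]_n) : psdmx (z *m adjmx z).
Proof. by apply/psdmxP => x; rewrite dotv_rank1 exprn_ge0. Qed.

Lemma density_normalize n (A : 'M[C]_n) :
  psdmx A -> 0 < \tr A -> density ((\tr A)^-1 *: A).
Proof.
move=> A_psd tr_gt0; split; first by apply: psdmxZ => //; rewrite invr_ge0 ltW.
by rewrite mxtraceZ mulVf // lt0r_neq0.
Qed.

Lemma psd_sum_rank1 n (A : 'M[C]_n) : psdmx A ->
  exists X : 'I_n -> 'cV[C]_n, A = \sum_r X r *m adjmx (X r).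
Proof.
move=> A_psd; have A_herm := psd_hermitian A_psd.
have /orthomx_spectralP A_spec : A \is normalmx.
  (* [normalmx] is phrased with [A ^t*], which is [adjmx A] up to [map_trmx]. *)
  have A_tc : map_mx Num.conj A^T = A by rewrite -map_trmx.
  by apply/normalmxP; rewrite A_tc.
set P := spectralmx A in A_spec; set d := spectral_diag A in A_spec.
have P_unitary : P \is unitarymx by exact: spectral_unitarymx.
pose q r : 'cV[C]_n := adjmx (row r P).
have dotv_q s r : dotv (q s) (q r) = (s == r)%:R.
  have /unitarymxP/matrixP/(_ s r) := P_unitary.
  rewrite !mxE => <-; rewrite dotvE; apply: eq_bigr => t _.
  by rewrite !mxE conjCK.
have A_dec : A = \sum_r d 0 r *: (q r *m adjmx (q r)).
  rewrite {1}A_spec invmx_unitary // mul_mx_diag; apply/matrixP => i j.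
  rewrite mxE summxE; apply: eq_bigr => r _; rewrite !mxE big_ord1 !mxE.
  by rewrite conjCK [_ * d 0 r]mulrC -mulrA.
have d_ge0 r : 0 <= d 0 r.
  have /psdmxP/(_ (q r)) := A_psd.
  rewrite {1}A_dec mulmx_suml dotv_sumr (bigD1 r) //= big1 => [|s /negbTE rs].
    by rewrite -scalemxAl dotvZr dotv_rank1 dotv_q eqxx normr1 expr1n mulr1 addr0.
  by rewrite -scalemxAl dotvZr dotv_rank1 dotv_q rs normr0 expr0n mulr0.
exists (fun r => sqrtC (d 0 r) *: q r); rewrite {1}A_dec; apply: eq_bigr => r _.
rewrite adjmxZ -scalemxAr -scalemxAl scalerA geC0_conj ?sqrtC_ge0 //.
by rewrite -expr2 sqrtCK.
Qed.

End PositiveSemidefinite.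

Section Perturbation.
Variable C : numClosedFieldType.

Definition mxnorm1 m n (A : 'M[C]_(m, n)) : C := \sum_i \sum_j `|A i j|.

Lemma mxnorm1_ge0 m n (A : 'M[C]_(m, n)) : 0 <= mxnorm1 A.
Proof. by apply: sumr_ge0 => i _; apply: sumr_ge0. Qed.

Lemma mxnorm1_eq0 m n (A : 'M[C]_(m, n)) : mxnorm1 A = 0 -> A = 0.
Proof.
move=> A0; apply/matrixP => i j; rewrite mxE; apply/eqP/normr0P.
have row_ge0 l : true -> 0 <= \sum_j `|A l j| by move=> _; apply: sumr_ge0.
have row0 := psumr_eq0P row_ge0 A0 (i := i) isT.
exact: (psumr_eq0P (fun l _ => normr_ge0 _) row0 (i := j) isT).
Qed.

Lemma mxnorm1Z m n c (A : 'M[C]_(m, n)) : mxnorm1 (c *: A) = `|c| * mxnorm1 A.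
Proof.
rewrite /mxnorm1 mulr_sumr; apply: eq_bigr => i _; rewrite mulr_sumr.
by apply: eq_bigr => j _; rewrite mxE normrM.
Qed.

Lemma mxnorm1M m n p (A : 'M[C]_(m, n)) (B : 'M[C]_(n, p)) :
  mxnorm1 (A *m B) <= mxnorm1 A * mxnorm1 B.
Proof.
rewrite /mxnorm1 mulr_suml; apply: ler_sum => i _.
apply: le_trans (_ : \sum_j \sum_l `|A i l| * `|B l j| <= _).
  apply: ler_sum => j _; rewrite mxE; apply: le_trans (ler_norm_sum _ _ _) _.
  by under eq_bigr do rewrite normrM.
rewrite exchange_big mulr_suml; apply: ler_sum => l _; rewrite -mulr_sumr.
apply: ler_wpM2l => //; rewrite (bigD1 l) //= lerDl.
by apply: sumr_ge0 => l' _; apply: sumr_ge0.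
Qed.

Lemma norm_dotv_mulmx_le n (A : 'M[C]_n) x :
  `|dotv x (A *m x)| <= mxnorm1 A * dotv x x.
Proof.
have sqr_le p : `|x p 0| ^+ 2 <= dotv x x.
  by rewrite dotvvE (bigD1 p) //= lerDl sumr_ge0 // => q _; rewrite exprn_ge0.
have mul_le p q : `|x p 0| * `|x q 0| <= dotv x x.
  rewrite -(ler_pMn2r (n := 2)) //.
  apply: le_trans (real_leif_mean_square_scaled (normr_real _) (normr_real _)).1 _.
  by rewrite mulr2n lerD.
rewrite dotvE /mxnorm1 mulr_suml; apply: le_trans (ler_norm_sum _ _ _) _.
apply: ler_sum => p _; rewrite mxE mulr_sumr mulr_suml.
apply: le_trans (ler_norm_sum _ _ _) _; apply: ler_sum => q _.
by rewrite !normrM norm_conjC mulrCA ler_wpM2l.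
Qed.

Lemma dotv_hermitian_real n (A : 'M[C]_n) x :
  adjmx A = A -> dotv x (A *m x) \is Num.real.
Proof.
by move=> A_herm; rewrite CrealE dotv_conj; apply/eqP; rewrite [in RHS]dotv_mulmxr A_herm.
Qed.

Lemma psd_add1_perturb n (A : 'M[C]_n) e :
  adjmx A = A -> 0 <= e -> e * mxnorm1 A <= 1 -> psdmx (1%:M + e *: A).
Proof.
move=> A_herm e_ge0 small; apply/psdmxP => x.
rewrite mulmxDl mul1mx -scalemxAl dotvDr dotvZr.
have eA_real : e * dotv x (A *m x) \is Num.real.
  by rewrite rpredM ?dotv_hermitian_real // ger0_real.
rewrite addrC -lerBlDr sub0r; apply: real_lerNnormlW eA_real _.
rewrite normrM ger0_norm //.
apply: le_trans (ler_wpM2l e_ge0 (norm_dotv_mulmx_le A x)) _.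
by rewrite mulrA ler_piMl ?dotvv_ge0.
Qed.

Lemma fixed_point_contraction_eq0 m (u : 'rV[C]_m) c (N : 'M[C]_m) :
  u = c *: (u *m N) -> `|c| * mxnorm1 N < 1 -> u = 0.
Proof.
move=> u_fix small; apply: mxnorm1_eq0.
have u_le : mxnorm1 u <= (`|c| * mxnorm1 N) * mxnorm1 u.
  by rewrite {1}u_fix mxnorm1Z -mulrA [mxnorm1 N * _]mulrC ler_wpM2l // mxnorm1M.
move: (mxnorm1_ge0 u); rewrite le_eqVlt => /orP[/eqP <- // | u_gt0].
by move: u_le; rewrite ler_pMl // lt_geF.
Qed.

Lemma unitmx_perturb n (A A' B : 'M[C]_n) e :
  A *m A' = 1%:M -> `|e| * mxnorm1 (B *m A') < 1 -> A + e *: B \in unitmx.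
Proof.
move=> AA' small; rewrite -row_free_unit; apply/inj_row_free => u.
rewrite mulmxDr -scalemxAr => /eqP; rewrite addr_eq0 => /eqP uA.
apply: (fixed_point_contraction_eq0 (c := - e) (N := B *m A')); last by rewrite normrN.
by rewrite -[u in LHS]mulmx1 -AA' [LHS]mulmxA uA mulNmx -scalemxAl scaleNr mulmxA.
Qed.

End Perturbation.

Section Bipartite.
Variables (C : numClosedFieldType) (k : nat).
Local Notation ix i j := (@mxtens_index k k (i, j)).
Local Notation F := (swapmx C k).

Lemma big_mxtens_index (G : 'I_(k * k) -> C) : \sum_p G p = \sum_i \sum_j G (ix i j).
Proof.
rewrite pair_big (reindex (@mxtens_index k k)) /=; last first.
  by exists (@mxtens_unindex k k) => p _; rewrite (mxtens_indexK, mxtens_unindexK).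
by apply: eq_bigr => -[i j].
Qed.

Lemma mxtens_index_eq a b c d : (ix a b == ix c d) = (a == c) && (b == d).
Proof. by rewrite (can_eq (@mxtens_indexK k k)) xpair_eqE. Qed.

Lemma mxtens_matrixP T (A B : 'M[T]_(k * k)) :
  (forall a b c d, A (ix a b) (ix c d) = B (ix a b) (ix c d)) -> A = B.
Proof.
move=> AB; apply/matrixP => p q.
by case: (mxtens_indexP p) => a b; case: (mxtens_indexP q) => c d; apply: AB.
Qed.

Lemma swapmxE a b c d : F (ix a b) (ix c d) = ((a == d) && (b == c))%:R.
Proof.
rewrite /swapmx summxE (big_only1 a) // => [|i /negbTE ia _]; last first.
  by rewrite summxE big1 // => j _; rewrite tensmxE !mxE eq_sym ia mul0r.
rewrite summxE (big_only1 c) // => [|j /negbTE jc _]; last first.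
  by rewrite tensmxE !mxE [c == j]eq_sym jc andbF mul0r.
by rewrite tensmxE !mxE !eqxx mul1r andbC [d == a]eq_sym.
Qed.

Definition mat_of_vec (x : 'cV[C]_(k * k)) : 'M[C]_k := \matrix_(i, j) x (ix i j) 0.
Definition vec_of_mat (X : 'M[C]_k) : 'cV[C]_(k * k) :=
  \col_p X (mxtens_unindex p).1 (mxtens_unindex p).2.

Lemma vec_of_matE X i j : vec_of_mat X (ix i j) 0 = X i j.
Proof. by rewrite mxE mxtens_indexK. Qed.

Lemma vec_of_matK : cancel vec_of_mat mat_of_vec.
Proof. by move=> X; apply/matrixP => i j; rewrite mxE vec_of_matE. Qed.

Lemma mat_of_vecK : cancel mat_of_vec vec_of_mat.
Proof.
move=> x; apply/matrixP => p j; rewrite ord1.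
by case: (mxtens_indexP p) => a b; rewrite vec_of_matE mxE.
Qed.

Lemma mat_of_vec0 : mat_of_vec 0 = 0.
Proof. by apply/matrixP => i j; rewrite !mxE. Qed.

Lemma mat_of_vecZ c x : mat_of_vec (c *: x) = c *: mat_of_vec x.
Proof. by apply/matrixP => i j; rewrite !mxE. Qed.

Lemma mat_of_vec_sum (I : finType) (x : I -> 'cV[C]_(k * k)) :
  mat_of_vec (\sum_i x i) = \sum_i mat_of_vec (x i).
Proof. by apply/matrixP => i j; rewrite !mxE !summxE; apply: eq_bigr => l _; rewrite mxE. Qed.

Lemma mat_of_vec_inj : injective mat_of_vec.
Proof. exact: can_inj mat_of_vecK. Qed.

Lemma dotv_mat_of_vec (x y : 'cV[C]_(k * k)) :
  dotv x y = \sum_i \sum_j (mat_of_vec x i j)^* * mat_of_vec y i j.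
Proof.
rewrite dotvE big_mxtens_index; apply: eq_bigr => i _; apply: eq_bigr => j _.
by rewrite !mxE.
Qed.

Lemma mat_of_vec_swap x : mat_of_vec (F *m x) = (mat_of_vec x)^T.
Proof.
apply/matrixP => i j; rewrite !mxE big_mxtens_index.
rewrite (big_only1 j) // => [|c /negbTE cj _]; last first.
  by rewrite big1 // => d _; rewrite swapmxE [j == c]eq_sym cj andbF mul0r.
rewrite (big_only1 i) // => [|d /negbTE di _]; last first.
  by rewrite swapmxE [i == d]eq_sym di mul0r.
by rewrite swapmxE !eqxx mul1r.
Qed.

Lemma swapmxK : F *m F = 1%:M.
Proof.
have FFx (x : 'cV[C]_(k * k)) : F *m (F *m x) = x.
  by apply: mat_of_vec_inj; rewrite !mat_of_vec_swap trmxK.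
apply/matrixP => p q.
have := congr1 (fun y : 'cV[C]_(k * k) => y p 0) (FFx (delta_mx q 0)).
by rewrite mulmxA -colE !mxE andbT.
Qed.

Lemma adjmx_swap : adjmx F = F.
Proof.
apply: mxtens_matrixP => a b c d.
by rewrite !mxE !swapmxE rmorph_nat [c == b]eq_sym [d == a]eq_sym andbC.
Qed.

Lemma mxtrace_swap : \tr F = k%:R.
Proof.
rewrite /mxtrace big_mxtens_index (eq_bigr (fun=> 1)) ?sumr_const ?card_ord // => i _.
rewrite (big_only1 i) // => [|j /negbTE ij _]; rewrite swapmxE ?eqxx //.
by rewrite [i == j]eq_sym ij.
Qed.

End Bipartite.

Section Reshuffling.
Variables (C : numClosedFieldType) (k : nat).
Local Notation ix i j := (@mxtens_index k k (i, j)).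
Local Notation F := (swapmx C k).

Lemma big_tens_deltaE (f : 'I_k -> 'I_k -> 'I_k -> 'I_k -> C) a b c d :
  (\sum_i \sum_j \sum_i' \sum_j' f i j i' j' *: (delta_mx i j *t delta_mx i' j') : 'M[C]_(k * k))
    (ix a b) (ix c d) = f a c b d.
Proof.
have E i j i' j' :
    (f i j i' j' *: (delta_mx i j *t delta_mx i' j') : 'M[C]_(k * k)) (ix a b) (ix c d) =
    f i j i' j' * (((a == i) && (c == j))%:R * ((b == i') && (d == j'))%:R).
  by rewrite mxE tensmxE !mxE.
rewrite summxE (big_only1 a) // => [|i ai _]; last first.
  rewrite summxE big1 // => j _; rewrite summxE big1 // => i' _.
  by rewrite summxE big1 // => j' _; rewrite E eq_sym (negbTE ai) mul0r mulr0.
rewrite summxE (big_only1 c) // => [|j cj _]; last first.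
  rewrite summxE big1 // => i' _.
  by rewrite summxE big1 // => j' _; rewrite E [c == j]eq_sym (negbTE cj) andbF mul0r mulr0.
rewrite summxE (big_only1 b) // => [|i' bi _]; last first.
  by rewrite summxE big1 // => j' _; rewrite E [b == i']eq_sym (negbTE bi) mulr0 mulr0.
rewrite summxE (big_only1 d) // => [|j' dj _]; last first.
  by rewrite E [d == j']eq_sym (negbTE dj) andbF mulr0 mulr0.
by rewrite E !eqxx !mulr1.
Qed.

Lemma ptransE (M : 'M[C]_(k * k)) a b c d : ptrans M (ix a b) (ix c d) = M (ix a d) (ix c b).
Proof.
have -> : ptrans M =
    \sum_i \sum_j \sum_i' \sum_j' coef M i j j' i' *: (delta_mx i j *t delta_mx i' j').
  by apply: eq_bigr => i _; apply: eq_bigr => j _; exact: exchange_big.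
by rewrite big_tens_deltaE.
Qed.

Lemma realignE (M : 'M[C]_(k * k)) a b c d : realign M (ix a b) (ix c d) = M (ix a c) (ix b d).
Proof.
have -> : realign M =
    \sum_i \sum_j \sum_i' \sum_j' coef M i i' j j' *: (delta_mx i j *t delta_mx i' j').
  by apply: eq_bigr => i _; exact: exchange_big.
by rewrite big_tens_deltaE.
Qed.

Lemma ptransD (A B : 'M[C]_(k * k)) : ptrans (A + B) = ptrans A + ptrans B.
Proof. by apply: mxtens_matrixP => a b c d; rewrite mxE !ptransE mxE. Qed.

Lemma ptransZ x (A : 'M[C]_(k * k)) : ptrans (x *: A) = x *: ptrans A.
Proof. by apply: mxtens_matrixP => a b c d; rewrite mxE !ptransE mxE. Qed.

Lemma realignD (A B : 'M[C]_(k * k)) : realign (A + B) = realign A + realign B.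
Proof. by apply: mxtens_matrixP => a b c d; rewrite mxE !realignE mxE. Qed.

Lemma realignZ x (A : 'M[C]_(k * k)) : realign (x *: A) = x *: realign A.
Proof. by apply: mxtens_matrixP => a b c d; rewrite mxE !realignE mxE. Qed.

Lemma adjmx_ptrans (A : 'M[C]_(k * k)) : adjmx (ptrans A) = ptrans (adjmx A).
Proof. by apply: mxtens_matrixP => a b c d; rewrite !mxE !ptransE !mxE. Qed.

Lemma ptrans1 : ptrans (1%:M : 'M[C]_(k * k)) = 1%:M.
Proof.
by apply: mxtens_matrixP => a b c d; rewrite ptransE !mxE !mxtens_index_eq [d == b]eq_sym.
Qed.

Definition omega : 'cV[C]_(k * k) := vec_of_mat 1%:M.

Definition omegamx : 'M[C]_(k * k) := omega *m adjmx omega.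

Lemma omegamxE a b c d : omegamx (ix a b) (ix c d) = ((a == b) && (c == d))%:R.
Proof. by rewrite /omegamx /omega mxE big_ord1 !mxE !mxtens_indexK rmorph_nat -natrM mulnb. Qed.

Lemma ptrans_swap : ptrans (F) = omegamx.
Proof. by apply: mxtens_matrixP => a b c d; rewrite ptransE swapmxE omegamxE [d == c]eq_sym. Qed.

Lemma realign1 : realign (1%:M : 'M[C]_(k * k)) = omegamx.
Proof. by apply: mxtens_matrixP => a b c d; rewrite realignE omegamxE !mxE !mxtens_index_eq. Qed.

Lemma realign_swap : realign (F) = F.
Proof. by apply: mxtens_matrixP => a b c d; rewrite realignE !swapmxE [c == b]eq_sym. Qed.

Lemma swap_omega : F *m omega = omega.
Proof. by apply: mat_of_vec_inj; rewrite mat_of_vec_swap vec_of_matK trmx1. Qed.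

Lemma dotv_omega : dotv omega omega = k%:R.
Proof.
rewrite dotv_mat_of_vec vec_of_matK (eq_bigr (fun=> 1)) ?sumr_const ?card_ord // => i _.
under eq_bigr => j _ do rewrite !mxE rmorph_nat -natrM mulnb andbb.
by rewrite (big_only1 i) ?eqxx // => j /negbTE ij _; rewrite eq_sym ij.
Qed.

Lemma omegamx_swap_mulmx_inv :
  (omegamx + F) *m (F - (k.+1%:R)^-1 *: omegamx) = 1%:M.
Proof.
set c := (k.+1%:R)^-1 : C.
have WF : omegamx *m F = omegamx.
  by rewrite -mulmxA -adjmx_swap -adjmxM swap_omega.
have FW : F *m omegamx = omegamx by rewrite mulmxA swap_omega.
have WW : omegamx *m omegamx = k%:R *: omegamx.
  rewrite mulmxA -(mulmxA omega) [adjmx omega *m omega]mx11_scalar.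
  by rewrite -/(dotv omega omega) dotv_omega mul_mx_scalar scalemxAl.
have ck : (c * k%:R) *: omegamx + c *: omegamx = omegamx.
  by rewrite -scalerDl -{2}[c]mulr1 -mulrDr natr1 mulVf ?scale1r ?pnatr_eq0.
rewrite mulmxDl !mulmxBr -!scalemxAr WF swapmxK WW FW scalerA.
by rewrite addrCA -addrA -opprD ck subrr addr0.
Qed.

End Reshuffling.

Section OrthoProjector.
Variables (C : numClosedFieldType) (m : nat) (P : 'M[C]_m).
Hypotheses (P_herm : adjmx P = P) (P_idem : P *m P = P).

Lemma orthoproj_colinear (v w : 'cV[C]_m) : P *m v != 0 ->
  (forall u, P *m u = u -> dotv v u = 0 -> dotv w u = 0) ->
  exists alpha, P *m w = alpha *: (P *m v).
Proof.
move=> Pv_neq0 v_orth_w; set W := P *m v; set Z := P *m w.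
have PW : forall u, dotv W u = dotv v (P *m u).
  by move=> u; rewrite dotv_mulmxr P_herm.
pose alpha := dotv W Z / dotv W W; exists alpha.
set U := Z - alpha *: W.
have PU : P *m U = U by rewrite mulmxBr -scalemxAr !mulmxA P_idem.
have WU : dotv W U = 0.
  by rewrite dotvBr dotvZr mulfVK ?subrr ?dotvv_eq0.
have ZU : dotv Z U = 0.
  rewrite /Z -{1}P_herm -dotv_mulmxr PU; apply: (v_orth_w _ PU).
  by rewrite -PU -PW.
have UU : dotv U U = 0 by rewrite {1}/U dotvBl dotvZl WU ZU mulr0 subrr.
by apply/eqP; rewrite -subr_eq0 -/U -dotvv_eq0 UU.
Qed.

End OrthoProjector.

Section Antisymmetric.
Variables (C : numClosedFieldType) (k : nat).
Local Notation F := (swapmx C k).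

Definition asymmx : 'M[C]_(k * k) := 2^-1 *: (1%:M - F).

Lemma adjmx_asymmx : adjmx asymmx = asymmx.
Proof. by rewrite /asymmx adjmxZ adjmxD adjmxN adjmx1 adjmx_swap fmorphV rmorph_nat. Qed.

Lemma asymmx_idem : asymmx *m asymmx = asymmx.
Proof.
rewrite /asymmx -scalemxAl -scalemxAr scalerA mulmxBl mul1mx mulmxBr mulmx1 swapmxK.
by rewrite opprB -mulr2n -scaler_nat scalerA -mulrA mulVf ?mulr1 ?pnatr_eq0.
Qed.

Lemma sym_mulmx_asymmx : (1%:M + F) *m asymmx = 0.
Proof.
rewrite /asymmx -scalemxAr mulmxDl mul1mx mulmxBr mulmx1 swapmxK.
by rewrite addrA subrK subrr scaler0.
Qed.

Lemma dotv_sym_ge0 x : 0 <= dotv x ((1%:M + F) *m x).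
Proof.
have adjmx_sym : adjmx (1%:M + F) = 1%:M + F by rewrite adjmxD adjmx1 adjmx_swap.
have sym_sq : (1%:M + F) *m (1%:M + F) = 2%:R *: (1%:M + F).
  by rewrite mulmxDl mul1mx mulmxDr mulmx1 swapmxK [F + 1%:M]addrC scaler_nat mulr2n.
have := dotvv_ge0 ((1%:M + F) *m x).
by rewrite -{1}adjmx_sym -dotv_mulmxr mulmxA sym_sq -scalemxAl dotvZr pmulr_rge0 ?ltr0n.
Qed.

Lemma mat_of_vec_asymmx z :
  mat_of_vec (asymmx *m z) = 2^-1 *: (mat_of_vec z - (mat_of_vec z)^T).
Proof.
rewrite -mat_of_vec_swap; apply/matrixP => i j.
by rewrite /asymmx -scalemxAl mulmxBl mul1mx !mxE.
Qed.

Lemma mat_of_vec_tens (x y : 'cV[C]_k) : mat_of_vec (x *t y) = x *m y^T.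
Proof.
apply/matrixP => i j; rewrite !mxE big_ord1 !mxE.
have -> : (0 : 'I_(1 * 1)) = mxtens_index (0, 0) by apply: val_inj.
by rewrite !mxtens_indexK.
Qed.

Lemma rank_asymmx_tens (x y : 'cV[C]_k) :
  (\rank (mat_of_vec (asymmx *m (x *t y))) <= 2)%N.
Proof.
rewrite mat_of_vec_asymmx mat_of_vec_tens trmx_mul trmxK.
have -> : x *m y^T - y *m x^T = row_mx x y *m col_mx y^T (- x^T).
  by rewrite mul_row_col mulmxN.
apply: leq_trans (mxrank_scale _ _) _.
exact: leq_trans (mxrankM_maxl _ _) (rank_leq_col _).
Qed.

End Antisymmetric.

Section Separable.
Variables (C : numClosedFieldType) (k : nat).

Lemma tensmxZl m n p q c (A : 'M[C]_(m, n)) (B : 'M[C]_(p, q)) :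
  (c *: A) *t B = c *: (A *t B).
Proof. by apply/matrixP => i j; rewrite !mxE mulrA. Qed.

Lemma tensmx_sum (I J : finType) m n p q (A : I -> 'M[C]_(m, n)) (B : J -> 'M[C]_(p, q)) :
  (\sum_i A i) *t (\sum_j B j) = \sum_i \sum_j (A i *t B j).
Proof.
apply/matrixP => P Q; case: (mxtens_indexP P) => a b; case: (mxtens_indexP Q) => c d.
rewrite tensmxE !summxE mulr_suml; apply: eq_bigr => i _.
by rewrite summxE mulr_sumr; apply: eq_bigr => j _; rewrite tensmxE.
Qed.

Lemma tens_rank1 m n (x : 'cV[C]_m) (y : 'cV[C]_n) :
  (x *m adjmx x) *t (y *m adjmx y) = (x *t y) *m adjmx (x *t y).
Proof. by rewrite adjmx_tens tensmx_mul. Qed.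

Lemma separable_sum_rank1 (rho : 'M[C]_(k * k)) : separable rho ->
  exists (I : finType) (x y : I -> 'cV[C]_k),
    rho = \sum_i (x i *t y i) *m adjmx (x i *t y i).
Proof.
case=> N [p [sigma [tau [p_ge0 [_ [sigma_density [tau_density ->]]]]]]].
have [X sigmaE] := fin_all_exists (fun m => psd_sum_rank1 (sigma_density m).1).
have [Y tauE] := fin_all_exists (fun m => psd_sum_rank1 (tau_density m).1).
pose x (t : 'I_N * 'I_k * 'I_k) := sqrtC (p t.1.1) *: X t.1.1 t.1.2.
exists ('I_N * 'I_k * 'I_k)%type, x, (fun t => Y t.1.1 t.2).
transitivity (\sum_m \sum_r \sum_s (x (m, r, s) *t Y m s) *m adjmx (x (m, r, s) *t Y m s)).
  apply: eq_bigr => m _; rewrite sigmaE tauE -tensmxZl scaler_sumr tensmx_sum.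
  apply: eq_bigr => r _; apply: eq_bigr => s _; rewrite -tens_rank1 adjmxZ.
  rewrite -scalemxAl -scalemxAr scalerA geC0_conj ?sqrtC_ge0 //.
  by rewrite -expr2 sqrtCK.
by rewrite pair_big pair_big; apply: eq_bigr => -[[m r] s].
Qed.

Lemma asymmx_not_separable (rho : 'M[C]_(k * k)) (v : 'cV[C]_(k * k)) :
  (2 < \rank (mat_of_vec (asymmx C k *m v)))%N ->
  (forall u, asymmx C k *m u = u -> (dotv u (rho *m u) == 0) = (dotv v u == 0)) ->
  ~ separable rho.
Proof.
move=> rank_gt2 rho_asym /separable_sum_rank1 [I [x [y rhoE]]].
set P := asymmx C k in rank_gt2 rho_asym *.
pose w i : 'cV[C]_(k * k) := x i *t y i.
have dotv_rho u : dotv u (rho *m u) = \sum_i `|dotv (w i) u| ^+ 2.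
  by rewrite rhoE dotv_sum_rank1.
have Pv_neq0 : P *m v != 0.
  by apply: contraTneq rank_gt2 => ->; rewrite mat_of_vec0 mxrank0.
have PPv : P *m (P *m v) = P *m v by rewrite mulmxA asymmx_idem.
have [i wi_Pv] : exists i, dotv (w i) (P *m v) != 0.
  have : dotv (P *m v) (rho *m (P *m v)) != 0.
    by rewrite rho_asym // -PPv dotv_mulmxr adjmx_asymmx dotvv_eq0.
  case: (pickP [pred i | dotv (w i) (P *m v) != 0]) => [i wi _|w0]; first by exists i.
  rewrite dotv_rho big1 ?eqxx // => i _.
  by move/negbFE/eqP: (w0 i) => ->; rewrite normr0 expr0n.
have w_orth u : P *m u = u -> dotv v u = 0 -> dotv (w i) u = 0.
  move=> Pu vu; have := rho_asym u Pu; rewrite vu eqxx dotv_rho => /eqP sum0.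
  have := psumr_eq0P (fun j _ => exprn_ge0 2 (normr_ge0 (dotv (w j) u))) sum0 (i := i) isT.
  by move/eqP; rewrite sqrf_eq0 normr_eq0 => /eqP.
have [alpha Pw] := orthoproj_colinear (adjmx_asymmx C k) (asymmx_idem C k) Pv_neq0 w_orth.
have alpha_neq0 : alpha != 0.
  apply: contraNneq wi_Pv => alpha0.
  by rewrite dotv_mulmxr adjmx_asymmx Pw alpha0 dotvZl conjC0 mul0r.
have := rank_asymmx_tens (x i) (y i); rewrite -/(w i) -/P Pw mat_of_vecZ.
by rewrite mxrank_scale_nz // leqNgt rank_gt2.
Qed.

End Separable.

Section Gamma.
Variables (C : numClosedFieldType) (k n : nat) (a b : 'I_n -> 'cV[C]_k).
Local Notation v := (vvec a b).
Local Notation F := (swapmx C k).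

Definition rows_of (c : 'I_n -> 'cV[C]_k) : 'M[C]_(n, k) := \matrix_(i, j) c i j 0.

Lemma mat_of_vvec : mat_of_vec v = (rows_of a)^T *m rows_of b.
Proof.
rewrite mat_of_vec_sum; under eq_bigr do rewrite mat_of_vec_tens.
by apply/matrixP => p q; rewrite !mxE summxE; apply: eq_bigr => i _; rewrite !mxE big_ord1 !mxE.
Qed.

Lemma lin_indep2_mx (c d : 'rV[C]_n) : lin_indep2 a b ->
  c *m rows_of a + d *m rows_of b = 0 -> c = 0 /\ d = 0.
Proof.
move=> ab_indep cd0; have [|c_eq0 d_eq0] := ab_indep (fun i => c 0 i) (fun i => d 0 i).
  apply/matrixP => j l; rewrite [l]ord1 [RHS]mxE.
  transitivity ((c *m rows_of a + d *m rows_of b) 0 j); last by rewrite cd0 mxE.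
  by rewrite !mxE !summxE; congr (_ + _); apply: eq_bigr => i _; rewrite !mxE.
by split; apply/matrixP => i j; rewrite (ord1 i) mxE ?c_eq0 ?d_eq0.
Qed.

Lemma rank_asymmx_vvec : lin_indep2 a b ->
  \rank (mat_of_vec (asymmx C k *m v)) = (n + n)%N.
Proof.
move=> ab_indep; set A := rows_of a; set B := rows_of b.
have VA : mat_of_vec v - (mat_of_vec v)^T = (col_mx A B)^T *m col_mx B (- A).
  by rewrite mat_of_vvec tr_col_mx mul_row_col trmx_mul trmxK mulmxN.
have AB_free : row_free (col_mx A B).
  apply/inj_row_free => u; rewrite -[u]hsubmxK mul_row_col.
  by move=> /(lin_indep2_mx ab_indep) [-> ->]; rewrite row_mx0.
have BA_free : row_free (col_mx B (- A)).
  apply/inj_row_free => u; rewrite -[u]hsubmxK mul_row_col mulmxN -mulNmx addrC.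
  move=> /(lin_indep2_mx ab_indep) [r_eq0 l_eq0].
  by rewrite l_eq0 -[rsubmx u]opprK r_eq0 oppr0 row_mx0.
rewrite mat_of_vec_asymmx mxrank_scale_nz ?invr_eq0 ?pnatr_eq0 // VA.
by rewrite -mxrank_tr trmx_mul trmxK mxrankMfree // mxrank_tr; apply/eqP.
Qed.

Lemma dotv_gammaeps e x :
  dotv x (gammaeps a b e *m x) = dotv x ((1%:M + F) *m x) + e * `|dotv v x| ^+ 2.
Proof. by rewrite /gammaeps mulmxDl dotvDr -scalemxAl dotvZr dotv_rank1. Qed.

Lemma gammaeps_psd e : 0 <= e -> psdmx (gammaeps a b e).
Proof.
move=> e_ge0; apply/psdmxP => x.
by rewrite dotv_gammaeps addr_ge0 ?dotv_sym_ge0 ?mulr_ge0 ?exprn_ge0.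
Qed.

Lemma mxtrace_gammaeps_gt0 e : 0 <= e -> (0 < k)%N -> 0 < \tr (gammaeps a b e).
Proof.
move=> e_ge0 k_gt0; rewrite /gammaeps !mxtraceD mxtraceZ mxtrace1 mxtrace_swap.
rewrite mxtrace_mulC trace_mx11 -/(dotv v v) -natrD ltr_wpDr ?mulr_ge0 ?dotvv_ge0 //.
by rewrite ltr0n addn_gt0 muln_gt0 k_gt0.
Qed.

Lemma gammaeps_not_separable e : 0 < e -> (0 < k)%N -> (2 <= n)%N -> lin_indep2 a b ->
  ~ separable ((\tr (gammaeps a b e))^-1 *: gammaeps a b e).
Proof.
move=> e_gt0 k_gt0 n_ge2 ab_indep; apply: (asymmx_not_separable (v := v)).
  by rewrite rank_asymmx_vvec //; exact: leq_add n_ge2 (ltnW n_ge2).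
move=> u asym_u; rewrite -scalemxAl dotvZr dotv_gammaeps.
rewrite -asym_u mulmxA sym_mulmx_asymmx mul0mx asym_u dotv0r add0r !mulf_eq0.
by rewrite invr_eq0 (gt_eqF (mxtrace_gammaeps_gt0 (ltW e_gt0) k_gt0)) (gt_eqF e_gt0) orbb normr_eq0.
Qed.

Lemma ptrans_gammaeps_psd e : 0 < e -> (0 < k)%N ->
  e * mxnorm1 (ptrans (v *m adjmx v)) <= 1 ->
  psdmx (ptrans ((\tr (gammaeps a b e))^-1 *: gammaeps a b e)).
Proof.
move=> e_gt0 k_gt0 small; rewrite ptransZ; apply: psdmxZ.
  by rewrite invr_ge0 (ltW (mxtrace_gammaeps_gt0 (ltW e_gt0) k_gt0)).
rewrite /gammaeps !ptransD ptransZ ptrans1 ptrans_swap addrAC.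
apply: psdmxD; last exact: psd_rank1.
by apply: psd_add1_perturb (ltW e_gt0) small; rewrite adjmx_ptrans adjmxM adjmxK.
Qed.

Lemma realign_gammaeps_unit e :
  `|e| * mxnorm1 (realign (v *m adjmx v) *m (F - (k.+1%:R)^-1 *: omegamx C k)) < 1 ->
  realign (gammaeps a b e) \in unitmx.
Proof.
rewrite /gammaeps !realignD realignZ realign1 realign_swap.
exact: unitmx_perturb (omegamx_swap_mulmx_inv C k).
Qed.

Lemma gammaeps_ppt_entangled_faithful : (0 < k)%N -> (2 <= n)%N -> lin_indep2 a b ->
  exists2 eps0 : C, 0 < eps0 & forall e, 0 < e -> e < eps0 ->
    let rho := (\tr (gammaeps a b e))^-1 *: gammaeps a b e in
    entangled rho /\ psdmx (ptrans rho) /\ realign (gammaeps a b e) \in unitmx.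
Proof.
move=> k_gt0 n_ge2 ab_indep.
set N1 := mxnorm1 (ptrans (v *m adjmx v)).
set N2 := mxnorm1 (realign (v *m adjmx v) *m (F - (k.+1%:R)^-1 *: omegamx C k)).
pose S := 1 + N1 + N2.
have N1_le : N1 <= S by rewrite /S -addrA addrCA lerDl addr_ge0 ?mxnorm1_ge0.
have N2_le : N2 <= S by rewrite /S lerDr addr_ge0 ?mxnorm1_ge0.
have S_gt0 : 0 < S.
  by apply: lt_le_trans ltr01 _; rewrite /S -addrA lerDl addr_ge0 ?mxnorm1_ge0.
exists S^-1; first by rewrite invr_gt0.
move=> e e_gt0 e_lt rho.
have e_small N : N <= S -> e * N < 1.
  move=> N_le; apply: le_lt_trans (ler_wpM2l (ltW e_gt0) N_le) _.
  by rewrite -ltr_pdivlMr // mul1r.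
split; first split.
- apply: density_normalize; first exact/gammaeps_psd/ltW.
  exact: mxtrace_gammaeps_gt0 (ltW e_gt0) k_gt0.
- exact: gammaeps_not_separable.
split; first exact/ptrans_gammaeps_psd/ltW/e_small.
by apply: realign_gammaeps_unit; rewrite gtr0_norm // e_small.
Qed.

End Gamma.

Theorem mainTheorem1 (R : realType) (k n : nat) (hk : (4 <= k)%N) (hn : (2 <= n)%N)
  (a b : 'I_n -> 'cV[R[i]]_k) (hind : lin_indep2 a b) :
  exists eps0 : R[i], 0 < eps0 /\
    forall eps : R[i], 0 < eps -> eps < eps0 ->
      let rho := (\tr (gammaeps a b eps))^-1 *: gammaeps a b eps in
      entangled rho /\ psdmx (ptrans rho) /\ realign (gammaeps a b eps) \in unitmx.
Proof.
have k_gt0 : (0 < k)%N by apply: leq_trans hk.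
have [eps0 eps0_gt0 small_eps] := gammaeps_ppt_entangled_faithful k_gt0 hn hind.
by exists eps0.
Qed.
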